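(* Suppose $\bar f:[a,b]\to\mathbb{R}_\mathcal{I}$ is differentiable on $[a,b]$ and $g:[a,b]\to[a,b]$ is differentiable. Then for every $x\in[a,b]$, $$(\bar f\circ g)'(x)=\bar f'(y)\,g'(x),\qquad y=g(x),$$ where $\bar f'(y)\,g'(x)$ denotes the scalar multiple $g'(x)\bar f'(y)$.
   Context: An interval number is a closed interval $\bar a=[a_l,a_r]$ with $a_l<a_r$ real; $\mathbb{R}_\mathcal{I}$ is the set of interval numbers. Write $a_c=(a_l+a_r)/2$, $a_w=(a_r-a_l)/2>0$, $\bar a=\langle a_c;a_w\rangle=[a_c-a_w,a_c+a_w]$. Operations: $\bar a-\bar b=\langle a_c-b_c;a_w/b_w\rangle$, $k\bar a=\langle ka_c;a_w^k\rangle$ for $k\in\mathbb{R}$ (a product of an interval number with a real number $k$ is this scalar multiple); for real $h\neq0$, $\bar c/h=\langle c_c/h;c_w^{1/h}\rangle$. Distance $d(\bar a,\bar b)=\sqrt{(a_c-b_c)^2+(\ln a_w-\ln b_w)^2}$; limits are with respect to $d$. $\bar f$ is differentiable at $x_0$ if $\bar f'(x_0)=\lim_{h\to0}\frac{\bar f(x_0+h)-\bar f(x_0)}{h}$ exists in $\mathbb{R}_\mathcal{I}$ (with $x_0+h\in[a,b]$); differentiable on $[a,b]$ if at every point. *)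

From Stdlib Require Import Reals Lra.
Open Scope R_scope.

(* An interval number <c; w> = [c - w, c + w] with w > 0. *)
Record inum : Type := INum { ic : R; iw : R; iw_pos : 0 < iw }.

Definition isub (a b : inum) : inum :=
  INum (ic a - ic b) (iw a / iw b) (Rdiv_lt_0_compat _ _ (iw_pos a) (iw_pos b)).

Definition iscal (k : R) (a : inum) : inum :=
  INum (k * ic a) (Rpower (iw a) k) (exp_pos _).

Definition idivr (c : inum) (h : R) : inum :=
  INum (ic c / h) (Rpower (iw c) (1 / h)) (exp_pos _).

Definition idist (a b : inum) : R :=
  sqrt ((ic a - ic b) ^ 2 + (ln (iw a) - ln (iw b)) ^ 2).

Definition is_iderive (a b : R) (f : R -> inum) (x0 : R) (L : inum) : Prop :=
  forall eps, 0 < eps -> exists delta, 0 < delta /\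
    forall h, h <> 0 -> Rabs h < delta -> a <= x0 + h <= b ->
      idist (idivr (isub (f (x0 + h)) (f x0)) h) L < eps.

Definition idifferentiable_at (a b : R) (f : R -> inum) (x0 : R) : Prop :=
  exists L, is_iderive a b f x0 L.

Definition idifferentiable_on (a b : R) (f : R -> inum) : Prop :=
  forall x, a <= x <= b -> idifferentiable_at a b f x.

Definition is_rderive (a b : R) (g : R -> R) (x0 l : R) : Prop :=
  forall eps, 0 < eps -> exists delta, 0 < delta /\
    forall h, h <> 0 -> Rabs h < delta -> a <= x0 + h <= b ->
      Rabs ((g (x0 + h) - g x0) / h - l) < eps.

Definition rdifferentiable_on (a b : R) (g : R -> R) : Prop :=
  forall x, a <= x <= b -> exists l, is_rderive a b g x l.

(* The metric d is the Euclidean distance between the points (a_c, ln a_w) of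
   the plane, and the operations on interval numbers act on these coordinates
   as ordinary real arithmetic: the difference quotient of f has coordinates
   the difference quotients of t |-> f_c t and t |-> ln f_w t, and k a has
   coordinates (k a_c, k ln a_w). Hence f is differentiable with derivative L
   exactly when both coordinate functions are, with derivatives L_c and ln L_w,
   and the theorem reduces to the real chain rule applied to each coordinate. *)

From Stdlib Require Import Reals Lra.
Open Scope R_scope.

Lemma Rabs_le_sqrt_sum_sqr_l (u w : R) : Rabs u <= sqrt (u ^ 2 + w ^ 2).
Proof.
rewrite <- (sqrt_pow2 (Rabs u)) by apply Rabs_pos.
apply sqrt_le_1_alt. rewrite pow2_abs. nra.
Qed.

Lemma Rabs_le_sqrt_sum_sqr_r (u w : R) : Rabs w <= sqrt (u ^ 2 + w ^ 2).
Proof. rewrite Rplus_comm. apply Rabs_le_sqrt_sum_sqr_l. Qed.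

Lemma sqrt_sum_sqr_le_Rabs_add (u w : R) : sqrt (u ^ 2 + w ^ 2) <= Rabs u + Rabs w.
Proof.
pose proof (Rabs_pos u). pose proof (Rabs_pos w).
rewrite <- (sqrt_pow2 (Rabs u + Rabs w)) by lra.
apply sqrt_le_1_alt.
replace ((Rabs u + Rabs w) ^ 2) with (Rabs u ^ 2 + Rabs w ^ 2 + 2 * Rabs u * Rabs w) by ring.
rewrite !pow2_abs. nra.
Qed.

Lemma ln_iw_iscal (k : R) (p : inum) : ln (iw (iscal k p)) = k * ln (iw p).
Proof. apply ln_Rpower. Qed.

Lemma ln_iw_idivr_isub (p q : inum) (h : R) :
  ln (iw (idivr (isub p q) h)) = (ln (iw p) - ln (iw q)) / h.
Proof.
simpl. rewrite ln_Rpower. unfold Rdiv.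
rewrite ln_mult, ln_Rinv by (try apply Rinv_0_lt_compat; apply iw_pos).
ring.
Qed.

Lemma idist_idivr_isub (p q L : inum) (h : R) :
  idist (idivr (isub p q) h) L =
  sqrt (((ic p - ic q) / h - ic L) ^ 2
        + ((ln (iw p) - ln (iw q)) / h - ln (iw L)) ^ 2).
Proof. unfold idist. rewrite ln_iw_idivr_isub. reflexivity. Qed.

Lemma is_iderive_iff_components (a b : R) (f : R -> inum) (x : R) (L : inum) :
  is_iderive a b f x L <->
  is_rderive a b (fun t => ic (f t)) x (ic L) /\
  is_rderive a b (fun t => ln (iw (f t))) x (ln (iw L)).
Proof.
split.
- intros Hf. split; intros eps Heps; destruct (Hf eps Heps) as [d [Hd Hq]];
    exists d; split; [exact Hd | | exact Hd |];
    intros h hne hlt hin; specialize (Hq h hne hlt hin);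
    rewrite idist_idivr_isub in Hq; eapply Rle_lt_trans; try exact Hq.
  + apply Rabs_le_sqrt_sum_sqr_l.
  + apply Rabs_le_sqrt_sum_sqr_r.
- intros [Hc Hw] eps Heps.
  destruct (Hc (eps / 2)) as [dc [Hdc Hqc]]; [lra |].
  destruct (Hw (eps / 2)) as [dw [Hdw Hqw]]; [lra |].
  exists (Rmin dc dw). split; [apply Rmin_pos; lra |].
  intros h hne hlt hin.
  specialize (Hqc h hne (Rlt_le_trans _ _ _ hlt (Rmin_l _ _)) hin).
  specialize (Hqw h hne (Rlt_le_trans _ _ _ hlt (Rmin_r _ _)) hin).
  rewrite idist_idivr_isub.
  eapply Rle_lt_trans; [apply sqrt_sum_sqr_le_Rabs_add |]. lra.
Qed.

Lemma is_rderive_increment (a b : R) (F : R -> R) (y l : R) :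
  is_rderive a b F y l ->
  forall eps, 0 < eps -> exists delta, 0 < delta /\
    forall k, Rabs k < delta -> a <= y + k <= b ->
      Rabs (F (y + k) - F y - l * k) <= eps * Rabs k.
Proof.
intros HF eps Heps. destruct (HF eps Heps) as [d [Hd Hq]].
exists d. split; [exact Hd |]. intros k hlt hin.
destruct (Req_dec k 0) as [-> | hne].
- rewrite Rplus_0_r. replace (F y - F y - l * 0) with 0 by ring.
  rewrite Rabs_R0. pose proof (Rabs_pos 0). nra.
- replace (F (y + k) - F y - l * k) with (k * ((F (y + k) - F y) / k - l))
    by (field; exact hne).
  rewrite Rabs_mult, Rmult_comm.
  apply Rmult_le_compat_r; [apply Rabs_pos |]. left. apply Hq; assumption.
Qed.

Lemma is_rderive_increment_bound (a b : R) (g : R -> R) (x l : R) :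
  is_rderive a b g x l ->
  exists delta, 0 < delta /\
    forall h, Rabs h < delta -> a <= x + h <= b ->
      Rabs (g (x + h) - g x) <= (Rabs l + 1) * Rabs h.
Proof.
intros Hg. destruct (is_rderive_increment _ _ _ _ _ Hg 1 Rlt_0_1) as [d [Hd Hinc]].
exists d. split; [exact Hd |]. intros h hlt hin.
specialize (Hinc h hlt hin).
pose proof (Rabs_triang (g (x + h) - g x - l * h) (l * h)) as Htri.
replace (g (x + h) - g x - l * h + l * h) with (g (x + h) - g x) in Htri by ring.
rewrite Rabs_mult in Htri. lra.
Qed.

(* Used with [k = g (x + h) - g x] and [dF = F (g x + k) - F (g x)]. *)
Lemma Rabs_chain_quotient_error (dF k h lF lg A eF eg : R) :
  h <> 0 -> 0 <= eF ->
  Rabs (dF - lF * k) <= eF * Rabs k -> Rabs k <= A * Rabs h ->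
  Rabs (k / h - lg) <= eg ->
  Rabs (dF / h - lg * lF) <= eF * A + Rabs lF * eg.
Proof.
intros hne HeF HdF Hk Hq.
assert (Hh : 0 < Rabs h) by (apply Rabs_pos_lt; exact hne).
replace (dF / h - lg * lF) with ((dF - lF * k) / h + lF * (k / h - lg))
  by (field; exact hne).
eapply Rle_trans; [apply Rabs_triang |].
apply Rplus_le_compat.
- unfold Rdiv. rewrite Rabs_mult, Rabs_inv.
  apply (Rmult_le_reg_r (Rabs h)); [exact Hh |].
  replace (Rabs (dF - lF * k) * / Rabs h * Rabs h) with (Rabs (dF - lF * k))
    by (field; lra).
  eapply Rle_trans; [exact HdF |].
  rewrite Rmult_assoc. apply Rmult_le_compat_l; assumption.
- rewrite Rabs_mult. apply Rmult_le_compat_l; [apply Rabs_pos | exact Hq].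
Qed.

Lemma is_rderive_comp (a b : R) (F g : R -> R) (x lF lg : R) :
  (forall t, a <= t <= b -> a <= g t <= b) ->
  is_rderive a b F (g x) lF -> is_rderive a b g x lg ->
  is_rderive a b (fun t => F (g t)) x (lg * lF).
Proof.
intros hgmap HF Hg eps Heps.
set (A := Rabs lg + 1). set (B := Rabs lF + 1).
assert (HA : 0 < A) by (unfold A; pose proof (Rabs_pos lg); lra).
assert (HB : 0 < B) by (unfold B; pose proof (Rabs_pos lF); lra).
assert (HeF : 0 < eps / (2 * A)) by (apply Rdiv_lt_0_compat; lra).
assert (Heg : 0 < eps / (2 * B)) by (apply Rdiv_lt_0_compat; lra).
destruct (is_rderive_increment _ _ _ _ _ HF _ HeF) as [dF [HdF HincF]].
destruct (is_rderive_increment_bound _ _ _ _ _ Hg) as [dg [Hdg Hbound]].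
destruct (Hg _ Heg) as [dq [Hdq Hqg]].
exists (Rmin (Rmin dg dq) (dF / A)). split.
{ apply Rmin_pos; [apply Rmin_pos | apply Rdiv_lt_0_compat]; lra. }
intros h hne hlt hin.
assert (hdg : Rabs h < dg) by
  (eapply Rlt_le_trans; [exact hlt |]; eapply Rle_trans; apply Rmin_l).
assert (hdq : Rabs h < dq) by
  (eapply Rlt_le_trans; [exact hlt |]; eapply Rle_trans; [apply Rmin_l | apply Rmin_r]).
assert (hdF : A * Rabs h < dF).
{ apply (Rmult_lt_reg_r (/ A)); [apply Rinv_0_lt_compat; exact HA |].
  replace (A * Rabs h * / A) with (Rabs h) by (field; lra).
  eapply Rlt_le_trans; [exact hlt | apply Rmin_r]. }
set (k := g (x + h) - g x).
assert (Hk : Rabs k <= A * Rabs h) by exact (Hbound h hdg hin).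
assert (Hgk : g x + k = g (x + h)) by (unfold k; ring).
assert (HD : Rabs (F (g (x + h)) - F (g x) - lF * k) <= eps / (2 * A) * Rabs k).
{ rewrite <- Hgk. apply HincF; [lra | rewrite Hgk; apply hgmap; exact hin]. }
assert (Hq : Rabs (k / h - lg) <= eps / (2 * B)) by (left; exact (Hqg h hne hdq hin)).
eapply Rle_lt_trans.
{ exact (Rabs_chain_quotient_error _ _ _ _ _ _ _ _ hne (Rlt_le _ _ HeF) HD Hk Hq). }
assert (HlF : Rabs lF * (eps / (2 * B)) < eps / 2).
{ apply (Rlt_le_trans _ (B * (eps / (2 * B)))); [| right; field; lra].
  apply Rmult_lt_compat_r; [exact Heg | unfold B; lra]. }
replace (eps / (2 * A) * A) with (eps / 2) by (field; lra).
lra.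
Qed.

Theorem theorem4p7 (a b : R) (f : R -> inum) (g : R -> R)
  (hab : a < b)
  (hf : idifferentiable_on a b f)
  (hgmap : forall x, a <= x <= b -> a <= g x <= b)
  (hg : rdifferentiable_on a b g) :
  forall x, a <= x <= b ->
    forall (Lf : inum) (lg : R),
      is_iderive a b f (g x) Lf ->
      is_rderive a b g x lg ->
      is_iderive a b (fun t => f (g t)) x (iscal lg Lf).
Proof.
(* Only the two pointwise derivatives are needed; [hab], [hf], [hg] are not. *)
intros x _ Lf lg HLf Hlg.
destruct (proj1 (is_iderive_iff_components _ _ _ _ _) HLf) as [Hc Hw].
apply is_iderive_iff_components. split.
- exact (is_rderive_comp _ _ (fun y => ic (f y)) g _ _ _ hgmap Hc Hlg).
- rewrite ln_iw_iscal.
  exact (is_rderive_comp _ _ (fun y => ln (iw (f y))) g _ _ _ hgmap Hw Hlg).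
Qed.
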